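(* For every $n\ge 2$, $\lceil \log_2 n\rceil \le \mathrm{isat}(n,\mathcal{D}_2)\le n+1$.
   Context: $\mathcal{B}_n$ denotes the Boolean lattice $(2^{[n]},\subseteq)$. A family $\mathcal{F}\subseteq 2^{[n]}$ (ordered by inclusion) is induced-$\mathcal{P}$-saturated if it contains no induced copy of $\mathcal{P}$ (an injection $f$ with $u\le v\iff f(u)\subseteq f(v)$) but every family $\mathcal{F}'$ with $\mathcal{F}\subsetneq\mathcal{F}'\subseteq 2^{[n]}$ contains one. $\mathrm{isat}(n,\mathcal{P})$ is the minimum size of an induced-$\mathcal{P}$-saturated family in $\mathcal{B}_n$. $\mathcal{D}_2$ (the diamond) is the four-element poset $\{A,B,C,D\}$ with $A<B<D$, $A<C<D$, and $B,C$ incomparable. *)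

From mathcomp Require Import all_boot.
Set Implicit Arguments. Unset Strict Implicit. Unset Printing Implicit Defensive.

(* The Boolean lattice B_n: subsets of [n] = 'I_n, ordered by inclusion.
   A family is an element of {set {set 'I_n}}. *)

(* A finite poset given by its (reflexive, antisymmetric, transitive) order
   relation [le] on a finType [P]. *)
Definition has_induced_copy (n : nat) (P : finType) (le : rel P)
  (F : {set {set 'I_n}}) : Prop :=
  exists f : P -> {set 'I_n},
    injective f /\ (forall u, f u \in F) /\
    (forall u v, le u v = (f u \subset f v)).

Definition induced_saturated (n : nat) (P : finType) (le : rel P)
  (F : {set {set 'I_n}}) : Prop :=
  ~ has_induced_copy le F /\
  (forall F' : {set {set 'I_n}}, F \proper F' -> has_induced_copy le F').

(* The diamond D_2 on 'I_4 : 0 = A, 1 = B, 2 = C, 3 = D, with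
   A < B < D, A < C < D, B and C incomparable. *)
Definition diamond_le : rel 'I_4 :=
  fun u v => (u == v) || (val u == 0) || (val v == 3).

From mathcomp Require Import all_boot.
Set Implicit Arguments. Unset Strict Implicit. Unset Printing Implicit Defensive.

(* Upper bound: the n + 1 initial segments of [n] form a chain, which contains
   no diamond since B and C are incomparable; and if S is any other set and i
   is the least point missing from S, then [0, i) < S, [0, i] < [n] is an
   induced diamond.
   Lower bound: in a saturated family F any two points x != y are separated by
   some member.  Otherwise removing x from a smallest member containing x (or
   adding x to a largest member, if no member contains x) gives a new set that
   is comparable to the old one and relates to every other member of F in the
   same way.  As distinct comparable elements of the diamond are never twins
   in this sense, the new set could be added to F without creating a diamond.
   Hence x |-> {B in F | x \in B} is injective and n <= 2 ^ #|F|. *)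

Definition twins (T : eqType) (D : {pred T}) (r : rel T) (a b : T) : Prop :=
  forall u, u \in D -> u != a -> u != b -> r u a = r u b /\ r a u = r b u.

Notation subset_rel := (fun X Y : {set _} => X \subset Y).

Lemma induced_copy_of_embedding (P : finType) (le : rel P) n
    (F : {set {set 'I_n}}) (f : P -> {set 'I_n}) :
  antisymmetric le -> (forall u, f u \in F) ->
  (forall u v, le u v = (f u \subset f v)) -> has_induced_copy le F.
Proof.
move=> le_anti fF frel; exists f; split=> // u v fuv.
by apply: le_anti; rewrite !frel fuv subxx.
Qed.

Lemma twins_setD1_of_minimal n (F : {set {set 'I_n}}) (x y : 'I_n)
    (A : {set 'I_n}) :
  x != y -> {in F, forall B : {set 'I_n}, (x \in B) = (y \in B)} ->
  A \in F -> x \in A ->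
  (forall B, (B \in F) && (x \in B) -> #|A| <= #|B|) ->
  [/\ A :\ x \notin F, A :\ x \subset A & twins F subset_rel A (A :\ x)].
Proof.
move=> xy Fxy AF xA Amin; have yA : y \in A by rewrite -Fxy.
have yAx : y \in A :\ x by rewrite in_setD1 eq_sym xy.
split; [| exact: subsetDl |].
  by apply: contraTN yAx => /Fxy <-; rewrite setD11.
move=> B BF BA _; split.
  apply/idP/idP => [BsubA | /subset_trans->//]; last exact: subsetDl.
  have xB : x \notin B.
    by apply: contra BA => xB; rewrite eqEcard BsubA Amin ?BF.
  by rewrite subsetD1 BsubA.
apply/idP/idP => [| AxB]; first exact/subset_trans/subsetDl.
have xB : x \in B by rewrite Fxy // (subsetP AxB).
by rewrite -(setD1K xA) subUset sub1set xB.
Qed.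

Lemma twins_setU1_of_maximal n (F : {set {set 'I_n}}) (x : 'I_n)
    (A : {set 'I_n}) :
  {in F, forall B : {set 'I_n}, x \notin B} ->
  A \in F -> (forall B, B \in F -> #|B| <= #|A|) ->
  [/\ x |: A \notin F, A \subset x |: A & twins F subset_rel A (x |: A)].
Proof.
move=> Fx AF Amax; split; [| exact: subsetUr |].
  by apply: contraTN (setU11 x A) => /Fx.
move=> B BF BA _; split.
  by rewrite -{1}(setU1K (Fx A AF)) subsetD1 Fx // andbT.
rewrite subUset sub1set (negbTE (Fx B BF)) /=.
apply/negbTE; apply: contra BA => AB.
by rewrite eq_sym eqEcard AB Amax.
Qed.

Section TwinExtension.

Variables (P : finType) (le : rel P).
Hypothesis le_anti : antisymmetric le.
Hypothesis no_comparable_twins :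
  forall a b : P, a != b -> le a b || le b a -> ~ twins predT le a b.

(* If only T is used, swap it back to A; if both are used, their preimages are
   comparable twins of P. *)
Lemma twin_extension_free n (F : {set {set 'I_n}}) (A T : {set 'I_n}) :
  ~ has_induced_copy le F -> A \in F -> T \notin F ->
  (A \subset T) || (T \subset A) -> twins F subset_rel A T ->
  ~ has_induced_copy le (T |: F).
Proof.
move=> nF AF TF cmp tw [f [finj [fF frel]]].
have memF u : f u != T -> f u \in F.
  by move=> fuT; move: (fF u); rewrite in_setU1 (negbTE fuT).
have AT : A != T by apply: contraNneq TF => <-.
case: (pickP (fun u => f u == A)) => [a /eqP fa | nA].
  case: (pickP (fun u => f u == T)) => [t /eqP ft | nT].
    apply: (no_comparable_twins (a := a) (b := t)).
    - by apply: contra_neq AT; rewrite -fa -ft => ->.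
    - by rewrite !frel fa ft.
    move=> u _ ua ut.
    have fuT : f u != T by rewrite -ft (inj_eq finj).
    have fuA : f u != A by rewrite -fa (inj_eq finj).
    by rewrite !frel fa ft; apply: tw; rewrite ?memF.
  by apply: nF; exists f; split=> //; split=> // u; rewrite memF ?nT.
apply: nF; apply: (@induced_copy_of_embedding _ _ _ _
  (fun u => if f u == T then A else f u) le_anti).
  by move=> u; case: ifP => [_ | /negbT /memF].
move=> u v; rewrite frel.
case: ifP => [/eqP fuT | /negbT fuT]; case: ifP => [/eqP fvT | /negbT fvT].
- by rewrite fuT fvT !subxx.
- by rewrite fuT; have [_ ->] := tw _ (memF _ fvT) (negbT (nA v)) fvT.
- by rewrite fvT; have [-> _] := tw _ (memF _ fuT) (negbT (nA u)) fuT.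
- by [].
Qed.

Lemma singleton_family_free n (X : {set 'I_n}) :
  1 < #|P| -> ~ has_induced_copy le [set X].
Proof.
move=> /card_gt1P [u [v [_ _ uv]]] [f [finj [fF _]]].
by move: uv; rewrite (finj u v) ?eqxx // (set1P (fF u)) (set1P (fF v)).
Qed.

Lemma saturated_separates n (F : {set {set 'I_n}}) (x y : 'I_n) :
  1 < #|P| -> induced_saturated le F -> x != y ->
  exists2 B, B \in F & (x \in B) != (y \in B).
Proof.
move=> P_gt1 [nF sat] xy.
have [/existsP [B /andP [BF xyB]] | /existsPn Fxy] :=
  boolP [exists B in F, (x \in B) != (y \in B)]; first by exists B.
have {}Fxy B : B \in F -> (x \in B) = (y \in B).
  by move=> BF; move: (Fxy B); rewrite BF negbK => /eqP.
exfalso.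
have no_twin A T : A \in F -> T \notin F -> (A \subset T) || (T \subset A) ->
    ~ twins F subset_rel A T.
  move=> AF TF AT tw; apply: (twin_extension_free nF AF TF AT tw).
  by apply/sat/properUr; rewrite sub1set.
have [/existsP [B0 xB0F] | /existsPn noxF] := boolP [exists B in F, x \in B].
  have [A /andP [AF xA] Amin] :=
    @arg_minnP _ B0 (fun B => (B \in F) && (x \in B)) (fun B => #|B|) xB0F.
  have [TF TA tw] := twins_setD1_of_minimal xy Fxy AF xA Amin.
  by apply: (no_twin A (A :\ x) AF TF _ tw); rewrite TA orbT.
have {}noxF B : B \in F -> x \notin B by move=> BF; move: (noxF B); rewrite BF.
have [F0 | [B0 B0F]] := set_0Vmem F.
  apply: (singleton_family_free (X := set0) P_gt1); apply: sat.
  by rewrite F0 proper0; apply/set0Pn; exists set0; rewrite inE.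
have [A AF Amax] := arg_maxnP (fun B : {set 'I_n} => #|B|) B0F.
have [TF AT tw] := twins_setU1_of_maximal noxF AF Amax.
by apply: (no_twin A (x |: A) AF TF _ tw); rewrite AT.
Qed.

Lemma saturated_card_ge_up_log n (F : {set {set 'I_n}}) :
  1 < #|P| -> induced_saturated le F -> up_log 2 n <= #|F|.
Proof.
move=> P_gt1 satF; apply: up_log_min => //.
pose trace (x : 'I_n) := [set B in F | x \in B].
have trace_inj : injective trace.
  move=> x y exy; apply/eqP; apply: contraT => xy.
  have [B BF] := saturated_separates P_gt1 satF xy.
  by move/setP/(_ B): exy; rewrite !inE BF /= => ->; rewrite eqxx.
rewrite -card_powerset -[X in X <= _]card_ord -(card_imset _ trace_inj).
apply/subset_leq_card/subsetP => _ /imsetP [x _ ->].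
by rewrite powersetE; apply/subsetP => B; rewrite inE => /andP [].
Qed.

End TwinExtension.

Lemma diamond_le_anti : antisymmetric diamond_le.
Proof.
by case=> [[|[|[|[|u]]]] hu] [[|[|[|[|v]]]] hv] //= _; apply: val_inj.
Qed.

Lemma diamond_comparable_not_twins (a b : 'I_4) :
  a != b -> diamond_le a b || diamond_le b a -> ~ twins predT diamond_le a b.
Proof.
move=> ab cmp.
have [u /and3P [ua ub]] : exists u : 'I_4, [&& u != a, u != b &
    (diamond_le u a != diamond_le u b) || (diamond_le a u != diamond_le b u)].
  by move: ab cmp; case: a b => [[|[|[|[|a]]]] ha] [[|[|[|[|b]]]] hb] //= _ _;
    first [ by exists ord0 | by exists (Ordinal (isT : 1 < 4))
          | by exists (Ordinal (isT : 2 < 4)) | by exists ord_max ].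
by move=> + tw; have [-> ->] := tw u isT ua ub; rewrite !eqxx.
Qed.

Lemma diamond_copy n (F : {set {set 'I_n}}) (a b c d : {set 'I_n}) :
  a \in F -> b \in F -> c \in F -> d \in F ->
  a \subset b -> a \subset c -> b \subset d -> c \subset d ->
  ~~ (b \subset c) -> ~~ (c \subset b) -> has_induced_copy diamond_le F.
Proof.
move=> aF bF cF dF ab ac bd cd bc cb.
have ba : ~~ (b \subset a) by apply: contra bc => /subset_trans; apply.
have ca : ~~ (c \subset a) by apply: contra cb => /subset_trans; apply.
have db : ~~ (d \subset b) by apply: contra cb; apply: subset_trans.
have dc : ~~ (d \subset c) by apply: contra bc; apply: subset_trans.
have da : ~~ (d \subset a) by apply: contra db => /subset_trans; apply.
apply: (@induced_copy_of_embedding _ _ _ _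
  (fun u : 'I_4 => nth d [:: a; b; c] u) diamond_le_anti).
  by case=> [[|[|[|[|u]]]] hu].
by case=> [[|[|[|[|u]]]] hu] [[|[|[|[|v]]]] hv] //=;
  rewrite ?subxx ?(negbTE ba, negbTE ca, negbTE da, negbTE db, negbTE dc,
                   negbTE bc, negbTE cb) ?(subset_trans ab bd).
Qed.

Lemma chain_diamond_free n (F : {set {set 'I_n}}) :
  {in F &, forall X Y : {set 'I_n}, (X \subset Y) || (Y \subset X)} ->
  ~ has_induced_copy diamond_le F.
Proof.
move=> chainF [f [_ [fF frel]]].
have := chainF _ _ (fF (Ordinal (isT : 1 < 4))) (fF (Ordinal (isT : 2 < 4))).
by rewrite -!frel.
Qed.

Definition initial_segment n (k : nat) : {set 'I_n} := [set z : 'I_n | z < k].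

Definition initial_segments n : {set {set 'I_n}} :=
  [set initial_segment n k | k : 'I_n.+1].

Lemma subset_initial_segment n a b :
  a <= b -> initial_segment n a \subset initial_segment n b.
Proof. by move=> ab; apply/subsetP => z; rewrite !inE => /leq_trans; apply. Qed.

Lemma initial_segmentT n : initial_segment n n = setT.
Proof. by apply/setP => z; rewrite !inE ltn_ord. Qed.

Lemma mem_initial_segments n k :
  k <= n -> initial_segment n k \in initial_segments n.
Proof. by move=> kn; apply/imsetP; exists (Ordinal (kn : k < n.+1)). Qed.

Lemma initial_segments_chain n :
  {in initial_segments n &, forall X Y : {set 'I_n},
     (X \subset Y) || (Y \subset X)}.
Proof.
move=> _ _ /imsetP [a _ ->] /imsetP [b _ ->].
case: (leqP a b) => [/subset_initial_segment -> // | /ltnW ba].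
by rewrite (subset_initial_segment n ba) orbT.
Qed.

Lemma card_initial_segments n : #|initial_segments n| <= n.+1.
Proof. by rewrite -[n.+1]card_ord leq_imset_card. Qed.

Lemma initial_segments_saturated n :
  induced_saturated diamond_le (initial_segments n).
Proof.
split; first exact/chain_diamond_free/initial_segments_chain.
move=> F' /properP [segsF' [S SF' Snseg]].
have segF' k : k <= n -> initial_segment n k \in F'.
  by move=> kn; apply: (subsetP segsF'); apply: mem_initial_segments.
have [z0 _ z0S] : exists2 z, z \in setT & z \notin S.
  apply/subsetPn; apply: contra Snseg; rewrite subTset => /eqP ->.
  by rewrite -initial_segmentT mem_initial_segments.
have [i iS imin] := @arg_minnP _ z0 (fun z => z \notin S) val z0S.
have segS : initial_segment n i \subset S.
  apply/subsetP => z; rewrite inE; apply: contraTT => zS.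
  by rewrite -leqNgt; apply: imin.
have S_segi : ~~ (S \subset initial_segment n i.+1).
  apply: contra Snseg => /subsetP Sseg.
  suff -> : S = initial_segment n i by exact/mem_initial_segments/ltnW.
  apply/eqP; rewrite eqEsubset segS andbT; apply/subsetP => z zS.
  move: (Sseg z zS); rewrite !inE ltnS leq_eqVlt => /orP [/eqP ezi | //].
  by move: zS; rewrite (val_inj ezi) (negbTE iS).
have seg_iS : ~~ (initial_segment n i.+1 \subset S).
  by apply/subsetPn; exists i; rewrite ?inE.
apply: (diamond_copy (segF' _ (ltnW (ltn_ord i))) SF' (segF' _ (ltn_ord i))
          (segF' _ (leqnn n)) segS (subset_initial_segment n (leqnSn i)) _ _
          S_segi seg_iS).
- by rewrite initial_segmentT subsetT.
- exact: subset_initial_segment.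
Qed.

Theorem theorem1p5 (n : nat) (hn : 2 <= n) :
  (exists F : {set {set 'I_n}},
      induced_saturated diamond_le F /\ #|F| <= n.+1) /\
  (forall F : {set {set 'I_n}},
      induced_saturated diamond_le F -> up_log 2 n <= #|F|).
Proof.
(* Both bounds hold for every n. *)
split.
  exists (initial_segments n).
  by split; [exact: initial_segments_saturated | exact: card_initial_segments].
move=> F; apply: saturated_card_ge_up_log.
- exact: diamond_le_anti.
- exact: diamond_comparable_not_twins.
by rewrite card_ord.
Qed.
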